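(* Let $N\geq 1$, let $U\in M_{2N}(\mathbb{C})$ be unitary with $U^{\rm T}=-U$, and let $\Phi^U_{4N}$ be the map defined on block matrices $X=\begin{pmatrix} X_{11} & X_{12}\\ X_{21} & X_{22}\end{pmatrix}$ ($X_{kl}\in M_{2N}(\mathbb{C})$) by $$\Phi^U_{4N}(X)=\frac{1}{2N}\begin{pmatrix} \mathbb{I}_{2N}\,\mathrm{Tr}X_{22} & -\big(X_{12}+UX_{21}^{\rm T}U^\dagger\big)\\ -\big(X_{21}+UX_{12}^{\rm T}U^\dagger\big) & \mathbb{I}_{2N}\,\mathrm{Tr}X_{11}\end{pmatrix}.$$ Let $W=W^U_{4N}=(\mathrm{id}\otimes\Phi^U_{4N})P^+_{4N}$, where $P^+_{4N}=\frac{1}{4N}\sum_{k,l=1}^{4N}|k\rangle\langle l|\otimes|k\rangle\langle l|$. Then $W$ is a nondecomposable entanglement witness: $\langle\psi\otimes\phi|W|\psi\otimes\phi\rangle\geq 0$ for all $\psi,\phi\in\mathbb{C}^{4N}$, $W$ is not positive semidefinite, and there exists a density matrix $\rho$ on $\mathbb{C}^{4N}\otimes\mathbb{C}^{4N}$ with positive semidefinite partial transpose $\rho^\Gamma\geq 0$ such that $\mathrm{Tr}(W\rho)<0$.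
   Context: $\{|k\rangle\}$ is the standard basis of $\mathbb{C}^{4N}$; $\mathrm{id}$ is the identity map on $M_{4N}(\mathbb{C})$; $\rho^\Gamma$ denotes the partial transpose of $\rho$ with respect to one tensor factor. A density matrix is a positive semidefinite matrix of trace one. *)

From HB Require Import structures.
From mathcomp Require Import all_boot all_order all_algebra.
From mathcomp Require Import sesquilinear spectral.
From mathcomp Require mxtens.

Set Implicit Arguments.
Unset Strict Implicit.
Unset Printing Implicit Defensive.

Import Order.TTheory GRing.Theory Num.Theory.
Local Open Scope ring_scope.

(* Kronecker product, standard ordering: index (i,j) |-> i*n + j. *)
Notation "A *t B" := (mxtens.tensmx A B)
  (at level 40, left associativity, format "A  *t  B") : ring_scope.

Definition adjmx {C : numClosedFieldType} m n (A : 'M[C]_(m, n)) : 'M[C]_(n, m) :=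
  (map_mx Num.conj A)^T.

Definition psdmx {C : numClosedFieldType} n (A : 'M[C]_n) : Prop :=
  adjmx A = A /\ forall v : 'cV[C]_n, 0 <= (adjmx v *m A *m v) 0 0.

Definition densitymx {C : numClosedFieldType} n (rho : 'M[C]_n) : Prop :=
  psdmx rho /\ \tr rho = 1.

(* partial transpose w.r.t. the second tensor factor of C^m (x) C^n *)
Definition ptrans {C : numClosedFieldType} m n (rho : 'M[C]_(m * n)) : 'M[C]_(m * n) :=
  \matrix_(a, b)
    rho (mxtens.mxtens_index ((mxtens.mxtens_unindex a).1, (mxtens.mxtens_unindex b).2))
        (mxtens.mxtens_index ((mxtens.mxtens_unindex b).1, (mxtens.mxtens_unindex a).2)).

(* the map Phi^U_{4N} on 'M_(2N + 2N), with blocks of size M = 2N *)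
Definition PhiU {C : numClosedFieldType} (M : nat) (U : 'M[C]_M)
  (X : 'M[C]_(M + M)) : 'M[C]_(M + M) :=
  let X11 := ulsubmx X in let X12 := ursubmx X in
  let X21 := dlsubmx X in let X22 := drsubmx X in
  (M%:R)^-1 *:
    block_mx ((\tr X22)%:M) (- (X12 + U *m X21^T *m adjmx U))
             (- (X21 + U *m X12^T *m adjmx U)) ((\tr X11)%:M).

Definition Pplus {C : numClosedFieldType} (n : nat) : 'M[C]_(n * n) :=
  (n%:R)^-1 *: \sum_(k < n) \sum_(l < n) (delta_mx k l *t delta_mx k l).

(* (id (x) Phi) applied to Y : 'M_(n*n) *)
Definition id_tens {C : numClosedFieldType} (n : nat) (Phi : 'M[C]_n -> 'M[C]_n)
  (Y : 'M[C]_(n * n)) : 'M[C]_(n * n) :=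
  \sum_(k < n) \sum_(l < n)
    (delta_mx k l *t
      Phi (\matrix_(a, b) Y (mxtens.mxtens_index (k, a)) (mxtens.mxtens_index (l, b)))).

From HB Require Import structures.
From mathcomp Require Import all_boot all_order all_algebra.
From mathcomp Require Import sesquilinear spectral.
From mathcomp Require mxtens.
From mathcomp Require Import ring.
Import Order.TTheory GRing.Theory Num.Theory.
Local Open Scope ring_scope.

Set Implicit Arguments.
Unset Strict Implicit.
Unset Printing Implicit Defensive.

(* Write M = 2N and split C^(2M) = C^M (+) C^M. Every matrix element of the
   witness W is a Kronecker-delta expression in the block labels, so Tr(W Z) is
   (M * 2M)^-1 times a signed sum of three kinds of matrix elements of Z.
   For Z = |psi (x) phi><psi (x) phi|, with p_s, q_s the
   halves of psi, phi, this becomes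
     |p_0|^2 |q_1|^2 + |p_1|^2 |q_0|^2 - 2 Re (s_0 conj s_1) - 2 Re (t_0 conj t_1),
   s_s = sum_i p_s(i) q_s(i),  t_s = <p_s U^T, q_s>.
   As U is skew-symmetric and unitary, conj p_s and p_s U^T are orthogonal of the
   same length, so Bessel's inequality bounds |s_s|^2 + |t_s|^2 by |p_s|^2 |q_s|^2,
   and AM-GM then controls the cross terms. The vector sum_k |k> (x) |k> gives a
   negative value of W, and an explicit PPT state built from the block projectors
   and the vectors Omega_st = sum_i |s i> (x) |t i> detects W. *)

Section ComplexInequalities.
Variable C : numClosedFieldType.

Lemma real_ler_sqr (x y : C) : x \is Num.real -> 0 <= y -> x ^+ 2 <= y ^+ 2 -> x <= y.
Proof.
move=> x_real y_ge0; case/orP: (real_leVge x_real (real0 C)) => [x_le0 _|x_ge0].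
  exact: le_trans x_le0 y_ge0.
by rewrite ler_sqr.
Qed.

Lemma cross_terms_le (a1 b1 a2 b2 A1 B1 A2 B2 : C) :
  0 <= A1 -> 0 <= B1 -> 0 <= A2 -> 0 <= B2 ->
  `|a1| ^+ 2 + `|b1| ^+ 2 <= A1 * B1 -> `|a2| ^+ 2 + `|b2| ^+ 2 <= A2 * B2 ->
  a1 * a2^* + a2 * a1^* + (b1 * b2^* + b2 * b1^*) <= A1 * B2 + A2 * B1.
Proof.
move=> A1_ge0 B1_ge0 A2_ge0 B2_ge0; rewrite !normCK => le1 le2.
set z := a1 * a2^* + b1 * b2^*.
have -> : a1 * a2^* + a2 * a1^* + (b1 * b2^* + b2 * b1^*) = z + z^*.
  by rewrite /z rmorphD !rmorphM /= !conjCK; ring.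
have re_le : (z + z^*) ^+ 2 <= 4 * (z * z^*).
  have -> : 4 * (z * z^*) = (z + z^*) ^+ 2 + (z - z^*) * (z - z^*)^*.
    by rewrite rmorphB /= conjCK; ring.
  by rewrite lerDl mul_conjC_ge0.
(* Lagrange's identity in C^2 *)
have lagrange : z * z^* <= (a1 * a1^* + b1 * b1^*) * (a2 * a2^* + b2 * b2^*).
  have -> : (a1 * a1^* + b1 * b1^*) * (a2 * a2^* + b2 * b2^*) =
      z * z^* + (a1 * b2 - b1 * a2) * (a1 * b2 - b1 * a2)^*.
    by rewrite /z !(rmorphB, rmorphD, rmorphM) /= !conjCK; ring.
  by rewrite lerDl mul_conjC_ge0.
have AM_GM : (A1 * B2) * (A2 * B1) *+ 4 <= (A1 * B2 + A2 * B1) ^+ 2.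
  by rewrite (real_leif_AGM2_scaled _ _).1 // ger0_real // mulr_ge0.
apply: real_ler_sqr; first by apply/CrealP; rewrite rmorphD /= conjCK addrC.
  by rewrite addr_ge0 // mulr_ge0.
apply: le_trans re_le (le_trans _ AM_GM).
rewrite -[X in _ <= X]mulr_natl ler_wpM2l // (le_trans lagrange) //.
have -> : A1 * B2 * (A2 * B1) = A1 * B1 * (A2 * B2) by ring.
by rewrite ler_pM // addr_ge0 ?mul_conjC_ge0.
Qed.

End ComplexInequalities.

Section DotProduct.
Variables (C : numClosedFieldType) (V : vectType C) (form : {dot V for Num.Def.conjC}).

(* Cauchy--Schwarz applied to the combination [<q, x> x + <q, y> y]. *)
Lemma Bessel2 (q x y : V) : form x y = 0 -> form y y = form x x ->
  `|form q x| ^+ 2 + `|form q y| ^+ 2 <= form q q * form x x.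
Proof.
move=> xy0 yy_xx.
set a := form q x; set b := form q y; set S := `|a| ^+ 2 + `|b| ^+ 2.
have S_ge0 : 0 <= S by rewrite addr_ge0 // exprn_ge0.
have qz : form q (a *: x + b *: y) = S.
  by rewrite linearD /= !linearZr_LR /= /S !normCK mulrC [b^* * _]mulrC.
have zz : form (a *: x + b *: y) (a *: x + b *: y) = S * form x x.
  rewrite (dnormD form) !(dnormZ form) linearZl_LR /= linearZr_LR /= xy0.
  by rewrite !mulr0 conjC0 !addr0 yy_xx -mulrDl.
have := (CauchySchwarz form q (a *: x + b *: y)).1.
rewrite qz zz ger0_norm // expr2 mulrCA.
have [-> _|S_neq0] := eqVneq S 0; first by rewrite mulr_ge0 ?dnorm_ge0.
by rewrite ler_pM2l // lt_def S_neq0.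
Qed.

End DotProduct.

Lemma skew_quad_form0 (R : numDomainType) m (A : 'M[R]_m) (u : 'rV[R]_m) :
  A^T = - A -> u *m A *m u^T = 0.
Proof.
move=> skewA; apply/matrixP => i j; rewrite !ord1 [RHS]mxE.
have xT : (u *m A *m u^T)^T = - (u *m A *m u^T).
  by rewrite !trmx_mul trmxK skewA mulNmx mulmxN mulmxA.
set x := (u *m A *m u^T) 0 0.
have : (u *m A *m u^T)^T 0 0 = (- (u *m A *m u^T)) 0 0 by rewrite xT.
rewrite [LHS]mxE [RHS]mxE -/x => x_opp.
have : x *+ 2 == 0 by rewrite mulr2n {1}x_opp addNr.
by rewrite mulrn_eq0 => /eqP.
Qed.

Section DotmxFacts.
Variable C : numClosedFieldType.

Lemma dotmx_sum m (u v : 'rV[C]_m) : dotmx u v = \sum_i u 0 i * (v 0 i)^*.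
Proof. by rewrite dotmxE mxE; apply: eq_bigr => i _; rewrite !mxE. Qed.

Lemma dotmx_unitary m (V : 'M[C]_m) (u v : 'rV[C]_m) :
  V \is unitarymx -> dotmx (u *m V) (v *m V) = dotmx u v.
Proof. by move=> unitV; rewrite !dotmxE trmx_mul map_mxM mulmxA mulmxtVK. Qed.

(* The vectors [conj p] and [p U^T] are orthogonal and of the same length. *)
Lemma skew_unitary_Bessel m (U : 'M[C]_m) (p q : 'rV[C]_m) :
  U^T = - U -> U \is unitarymx ->
  `|dotmx p (map_mx Num.conj q)| ^+ 2 + `|dotmx (p *m U^T) q| ^+ 2 <=
  dotmx p p * dotmx q q.
Proof.
move=> skewU unitU; set x := map_mx Num.conj p; set y := p *m U^T.
have xy0 : dotmx x y = 0.
  have skewUT : U^T^T = - U^T by rewrite trmxK skewU opprK.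
  have := congr1 (fun A : 'M[C]_1 => (A 0 0)^*) (skew_quad_form0 p skewUT).
  rewrite /= [(0 : 'M[C]_1) 0 0]mxE conjC0 => <-.
  rewrite dotmx_sum mxE rmorph_sum; apply: eq_bigr => c _.
  by rewrite !mxE rmorphM mulrC.
have yy : dotmx y y = dotmx x x.
  rewrite dotmx_unitary ?trmx_unitary // !dotmx_sum.
  by apply: eq_bigr => i _; rewrite !mxE conjCK mulrC.
have /= := Bessel2 (form := @dotmx C m) q xy0 yy.
have -> : dotmx q x = dotmx p (map_mx Num.conj q).
  by rewrite /x !dotmx_sum; apply: eq_bigr => i _; rewrite !mxE !conjCK mulrC.
have -> : dotmx x x = dotmx p p.
  by rewrite /x !dotmx_sum; apply: eq_bigr => i _; rewrite !mxE conjCK mulrC.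
have -> : dotmx q y = (dotmx y q)^*.
  rewrite !dotmx_sum rmorph_sum; apply: eq_bigr => i _.
  by rewrite rmorphM /= conjCK mulrC.
by rewrite norm_conjC mulrC.
Qed.

End DotmxFacts.

Section SquareSums.
Variables (C : numClosedFieldType) (m : nat).

Definition sqsum (f : 'I_m -> 'I_m -> C) : C := \sum_i \sum_c f i c * (f i c)^*.

Lemma sqsum_ge0 f : 0 <= sqsum f.
Proof. by rewrite sumr_ge0 // => i _; rewrite sumr_ge0 // => c _; rewrite mul_conjC_ge0. Qed.

Lemma sum2_mul_conj (g h : 'I_m -> C) :
  \sum_i \sum_j g j * (h i)^* = (\sum_j g j) * (\sum_i h i)^*.
Proof.
by rewrite exchange_big mulr_suml rmorph_sum; apply: eq_bigr => j _; rewrite mulr_sumr.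
Qed.

Lemma sqsum_addT (z : C) (f g : 'I_m -> 'I_m -> C) : z^* = z -> z * z = 1 ->
  sqsum (fun i c => f i c + z * g c i) =
  sqsum f + sqsum g + z * \sum_i \sum_c g c i * (f i c)^* +
  z * \sum_i \sum_c f c i * (g i c)^*.
Proof.
move=> z_real zz.
have -> : sqsum g = \sum_i \sum_c g c i * (g c i)^* by rewrite /sqsum exchange_big.
have -> : \sum_i \sum_c f c i * (g i c)^* = \sum_i \sum_c f i c * (g c i)^*.
  by rewrite exchange_big.
rewrite /sqsum !mulr_sumr -!big_split; apply: eq_bigr => i _.
rewrite !mulr_sumr -!big_split; apply: eq_bigr => c _; rewrite rmorphD rmorphM /= z_real.
have -> : (f i c + z * g c i) * ((f i c)^* + z * (g c i)^*) = f i c * (f i c)^* +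
    (z * z) * (g c i * (g c i)^*) + z * (g c i * (f i c)^*) + z * (f i c * (g c i)^*).
  by ring.
by rewrite zz mul1r.
Qed.

Lemma sum_diag_sqr_le (f : 'I_m -> 'I_m -> C) :
  (\sum_i f i i) * (\sum_i f i i)^* <= m%:R * sqsum f.
Proof.
pose u : 'rV[C]_m := \row_i f i i; pose one : 'rV[C]_m := const_mx 1.
have /= := (CauchySchwarz (@dotmx C m) u one).1.
have -> : dotmx u one = \sum_i f i i.
  by rewrite dotmx_sum; apply: eq_bigr => i _; rewrite !mxE conjC1 mulr1.
have -> : dotmx one one = m%:R.
  rewrite dotmx_sum (eq_bigr (fun _ => 1)) ?sumr_const ?card_ord // => i _.
  by rewrite !mxE conjC1 mulr1.
rewrite normCK => /le_trans; apply; rewrite mulrC ler_wpM2l ?ler0n // dotmx_sum /sqsum.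
apply: ler_sum => i _; rewrite (bigD1 i) //= !mxE lerDl.
by rewrite sumr_ge0 // => j _; rewrite mul_conjC_ge0.
Qed.

(* The quadratic forms of [ppt_state] and of its partial transpose, written in
   terms of the four blocks a, b, e, f of a vector (indices 11, 00, 10, 01). *)
Lemma block_form_ge0 (a b e f : 'I_m -> 'I_m -> C) :
  0 <= (m * m)%:R * sqsum a + m%:R * \sum_i \sum_j b j j * (a i i)^* +
    (m%:R * sqsum e + -1 * \sum_i \sum_j f j j * (e i i)^*) +
    (-1 * \sum_i \sum_j e j j * (f i i)^* + m%:R * sqsum f +
     (m%:R * \sum_i \sum_j a j j * (b i i)^* + (m * m)%:R * sqsum b)).
Proof.
rewrite !sum2_mul_conj natrM.
set ta := \sum_i a i i; set tb := \sum_i b i i.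
set te := \sum_i e i i; set tf := \sum_i f i i.
have trace_le g : 0 <= m%:R * sqsum g - (\sum_i g i i) * (\sum_i g i i)^*.
  by rewrite subr_ge0 sum_diag_sqr_le.
have -> : m%:R * m%:R * sqsum a + m%:R * (tb * ta^*) + (m%:R * sqsum e + -1 * (tf * te^*)) +
    (-1 * (te * tf^*) + m%:R * sqsum f + (m%:R * (ta * tb^*) + m%:R * m%:R * sqsum b)) =
  m%:R * (m%:R * sqsum a - ta * ta^*) + m%:R * (m%:R * sqsum b - tb * tb^*) +
  (m%:R * sqsum e - te * te^*) + (m%:R * sqsum f - tf * tf^*) +
  m%:R * ((ta + tb) * (ta + tb)^*) + (te - tf) * (te - tf)^*.
  by rewrite rmorphD rmorphB /=; ring.
have m_ge0 : 0 <= m%:R :> C := ler0n _ _.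
exact: addr_ge0 (addr_ge0 (addr_ge0 (addr_ge0 (addr_ge0
  (mulr_ge0 m_ge0 (trace_le a)) (mulr_ge0 m_ge0 (trace_le b))) (trace_le e)) (trace_le f))
  (mulr_ge0 m_ge0 (mul_conjC_ge0 _))) (mul_conjC_ge0 _).
Qed.

Lemma block_form_ptrans_ge0 (a b e f : 'I_m -> 'I_m -> C) : (0 < m)%N ->
  0 <= (m * m)%:R * sqsum a + -1 * \sum_i \sum_c b c i * (a i c)^* +
    (m%:R * sqsum e + m%:R * \sum_i \sum_c f c i * (e i c)^*) +
    (m%:R * \sum_i \sum_c e c i * (f i c)^* + m%:R * sqsum f +
     (-1 * \sum_i \sum_c a c i * (b i c)^* + (m * m)%:R * sqsum b)).
Proof.
move=> m_gt0.
have eab := @sqsum_addT (-1) a b (rmorphN1 _) ltac:(by rewrite mulN1r opprK).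
have eef := @sqsum_addT 1 e f (rmorph1 _) (mulr1 1).
have MM1_ge0 : 0 <= (m * m)%:R - 1 :> C by rewrite subr_ge0 ler1n muln_gt0 m_gt0.
set X1 := \sum_i \sum_c b c i * (a i c)^*; set X2 := \sum_i \sum_c a c i * (b i c)^*.
set Y1 := \sum_i \sum_c f c i * (e i c)^*; set Y2 := \sum_i \sum_c e c i * (f i c)^*.
have -> : (m * m)%:R * sqsum a + -1 * X1 + (m%:R * sqsum e + m%:R * Y1) +
    (m%:R * Y2 + m%:R * sqsum f + (-1 * X2 + (m * m)%:R * sqsum b)) =
  ((m * m)%:R - 1) * (sqsum a + sqsum b) + (sqsum a + sqsum b + -1 * X1 + -1 * X2) +
  m%:R * (sqsum e + sqsum f + 1 * Y1 + 1 * Y2) by ring.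
rewrite -eab -eef.
exact: addr_ge0 (addr_ge0 (mulr_ge0 MM1_ge0 (addr_ge0 (sqsum_ge0 a) (sqsum_ge0 b)))
  (sqsum_ge0 _)) (mulr_ge0 (ler0n _ _) (sqsum_ge0 _)).
Qed.

End SquareSums.

Local Notation idx := mxtens.mxtens_index.

Lemma big_mxtens (V : nmodType) m n (F : 'I_(m * n) -> V) :
  \sum_x F x = \sum_k \sum_a F (idx (k, a)).
Proof.
rewrite pair_big /= (reindex (@mxtens.mxtens_index m n)) /=.
  by apply: eq_bigr => -[].
by exists (@mxtens.mxtens_unindex m n) => x _;
  rewrite (mxtens.mxtens_indexK, mxtens.mxtens_unindexK).
Qed.

Lemma tensmx_colE (R : pzRingType) m n (u : 'cV[R]_m) (v : 'cV[R]_n) k a :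
  (u *t v) (idx (k, a)) 0 = u k 0 * v a 0.
Proof. by rewrite mxE mxtens.mxtens_indexK /= [in u k _]ord1 [in v a _]ord1. Qed.

Lemma mxform_trace (C : numClosedFieldType) n (A : 'M[C]_n) (v : 'cV[C]_n) :
  (adjmx v *m A *m v) 0 0 = \tr (A *m (v *m adjmx v)).
Proof. by rewrite -trace_mx11 mxtrace_mulC !mulmxA mxtrace_mulC mulmxA. Qed.

Lemma mul_adjmxE (C : numClosedFieldType) n (v : 'cV[C]_n) x y :
  (v *m adjmx v) x y = v x 0 * (v y 0)^*.
Proof. by rewrite mxE big_ord1 !mxE. Qed.

Lemma sum_delta_tensE (R : pzRingType) m n (F : 'I_m -> 'I_m -> 'M[R]_n) k a l b :
  (\sum_k' \sum_l' (delta_mx k' l' *t F k' l')) (idx (k, a)) (idx (l, b)) = F k l a b.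
Proof.
rewrite summxE (bigD1 k) //= summxE (bigD1 l) //= big1 => [|l' ne]; last first.
  by rewrite mxtens.tensmxE mxE eqxx [l == _]eq_sym (negbTE ne) mul0r.
rewrite big1 => [|k' ne]; last first.
  by rewrite summxE big1 // => l' _; rewrite mxtens.tensmxE mxE [k == _]eq_sym (negbTE ne) mul0r.
by rewrite !addr0 mxtens.tensmxE mxE !eqxx mul1r.
Qed.

Lemma ptransE (C : numClosedFieldType) m n (A : 'M[C]_(m * n)) k a l b :
  ptrans A (idx (k, a)) (idx (l, b)) = A (idx (k, b)) (idx (l, a)).
Proof. by rewrite mxE !mxtens.mxtens_indexK. Qed.

Lemma adjmx_tens_id (C : numClosedFieldType) m n (A : 'M[C]_(m * n)) :
  (forall k a l b, (A (idx (l, b)) (idx (k, a)))^* = A (idx (k, a)) (idx (l, b))) ->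
  adjmx A = A.
Proof.
move=> herm; apply/matrixP => x y; rewrite !mxE.
by rewrite -[x]mxtens.mxtens_unindexK -[y]mxtens.mxtens_unindexK; case: (_ x) (_ y) => [k a] [l b].
Qed.

Section Blocks.
Variable M : nat.

Definition bshift (s : bool) (i : 'I_M) : 'I_(M + M) :=
  if s then rshift M i else lshift M i.
Definition bblock (k : 'I_(M + M)) : bool := if split k is inr _ then true else false.
Definition bindex (k : 'I_(M + M)) : 'I_M := match split k with inl i | inr i => i end.

Lemma split_bshift s i : split (bshift s i) = if s then inr i else inl i.
Proof.
by case: s; [exact: (unsplitK (inr i : 'I_M + 'I_M)) | exact: (unsplitK (inl i))].
Qed.

Lemma bblock_bshift s i : bblock (bshift s i) = s.
Proof. by rewrite /bblock split_bshift; case: s. Qed.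

Lemma bindex_bshift s i : bindex (bshift s i) = i.
Proof. by rewrite /bindex split_bshift; case: s. Qed.

Lemma eq_bshift s i t j : (bshift s i == bshift t j) = (s == t) && (i == j).
Proof.
apply/eqP/andP => [e|[/eqP-> /eqP->] //]; split; apply/eqP.
  by rewrite -(bblock_bshift s i) e bblock_bshift.
by rewrite -(bindex_bshift s i) e bindex_bshift.
Qed.

Lemma big_bshift (R : pzRingType) (F : 'I_(M + M) -> R) :
  \sum_k F k = \sum_(s : bool) \sum_i F (bshift s i).
Proof. by rewrite mxtens.sumr_add big_bool addrC. Qed.

Lemma big_mxtens_bshift (R : pzRingType) (F : 'I_((M + M) * (M + M)) -> R) :
  \sum_x F x = \sum_(s : bool) \sum_(t : bool) \sum_i \sum_c F (idx (bshift s i, bshift t c)).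
Proof.
rewrite big_mxtens big_bshift; apply: eq_bigr => s _.
by under eq_bigr do rewrite big_bshift; rewrite exchange_big.
Qed.

End Blocks.

Arguments bshift {M} s i : simpl never.

Section BlockTrace.
Variables (R : comPzRingType) (M : nat).
Local Notation n := (M + M)%N.

Lemma mxtrace_mul_bshift (A B : 'M[R]_(n * n)) (k0 : R)
    (g : bool -> 'I_M -> bool -> 'I_M -> bool -> 'I_M -> bool -> 'I_M -> R)
    (b : 'I_(n * n) -> 'I_(n * n) -> R) :
  (forall s i t c s' j t' d,
     A (idx (bshift s i, bshift t c)) (idx (bshift s' j, bshift t' d)) =
     k0 * g s i t c s' j t' d) ->
  (forall x y, B x y = b x y) ->
  \tr (A *m B) = k0 *
    \sum_(s : bool) \sum_(t : bool) \sum_(s' : bool) \sum_(t' : bool)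
      \sum_i \sum_c \sum_j \sum_d
        (g s i t c s' j t' d *
         b (idx (bshift s' j, bshift t' d)) (idx (bshift s i, bshift t c))).
Proof.
move=> Aentries Bentries; rewrite /mxtrace big_mxtens_bshift mulr_sumr.
apply: eq_bigr => s _; rewrite mulr_sumr; apply: eq_bigr => t _.
under eq_bigr => i _ do under eq_bigr => c _ do rewrite mxE big_mxtens_bshift.
under eq_bigr => i _ do rewrite exchange_big.
rewrite exchange_big mulr_sumr; apply: eq_bigr => s' _.
under eq_bigr => i _ do rewrite exchange_big.
rewrite exchange_big mulr_sumr; apply: eq_bigr => t' _.
rewrite mulr_sumr; apply: eq_bigr => i _; rewrite mulr_sumr; apply: eq_bigr => c _.
rewrite mulr_sumr; apply: eq_bigr => j _; rewrite mulr_sumr; apply: eq_bigr => d _.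
by rewrite Aentries Bentries mulrA.
Qed.

End BlockTrace.

Lemma sum2_const (R : pzSemiRingType) m (k : R) :
  \sum_(i < m) \sum_(c < m) k = (m * m)%:R * k.
Proof. by rewrite !sumr_const card_ord -mulrnA mulr_natl. Qed.

Section KroneckerSums.
Variables (R : comPzRingType) (m : nat).
Implicit Type G : 'I_m -> 'I_m -> 'I_m -> 'I_m -> R.

Lemma sum4_mul0 G : \sum_i \sum_c \sum_j \sum_d (0 * G i c j d) = 0.
Proof.
by rewrite big1 // => i _; rewrite big1 // => c _; rewrite big1 // => j _;
  rewrite big1 // => d _; rewrite mul0r.
Qed.

Lemma sum4_mulNl (F : 'I_m -> 'I_m -> 'I_m -> 'I_m -> R) G :
  \sum_i \sum_c \sum_j \sum_d (- F i c j d * G i c j d) =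
  - \sum_i \sum_c \sum_j \sum_d (F i c j d * G i c j d).
Proof.
rewrite -sumrN; apply: eq_bigr => i _; rewrite -sumrN; apply: eq_bigr => c _.
rewrite -sumrN; apply: eq_bigr => j _; rewrite -sumrN; apply: eq_bigr => d _.
by rewrite mulNr.
Qed.

Lemma sum4_diag G :
  \sum_i \sum_c \sum_j \sum_d ((i == j)%:R * (c == d)%:R * G i c j d) =
  \sum_i \sum_c G i c i c.
Proof.
apply: eq_bigr => i _; apply: eq_bigr => c _.
rewrite (bigD1 i) //= [X in _ + X]big1 ?addr0 => [|j /negbTE ne]; last first.
  by rewrite big1 // => d _; rewrite eq_sym ne !mul0r.
rewrite (bigD1 c) //= big1 ?addr0 => [|d /negbTE ne]; last by rewrite eq_sym ne mulr0 mul0r.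
by rewrite !eqxx !mul1r.
Qed.

Lemma sum4_diagZ (a : R) G :
  \sum_i \sum_c \sum_j \sum_d ((i == j)%:R * (c == d)%:R * a * G i c j d) =
  a * \sum_i \sum_c G i c i c.
Proof.
rewrite -sum4_diag mulr_sumr; apply: eq_bigr => i _; rewrite mulr_sumr.
apply: eq_bigr => c _; rewrite mulr_sumr; apply: eq_bigr => j _; rewrite mulr_sumr.
by apply: eq_bigr => d _; rewrite -mulrA mulrCA.
Qed.

Lemma sum4_diagZ_sym (a : R) G :
  \sum_i \sum_c \sum_j \sum_d ((i == j)%:R * (d == c)%:R * a * G i c j d) =
  a * \sum_i \sum_c G i c i c.
Proof.
rewrite -sum4_diagZ; apply: eq_bigr => i _; apply: eq_bigr => c _.
by apply: eq_bigr => j _; apply: eq_bigr => d _; rewrite (eq_sym d).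
Qed.

Lemma sum4_crossZ (a : R) G :
  \sum_i \sum_c \sum_j \sum_d ((c == i)%:R * (d == j)%:R * a * G i c j d) =
  a * \sum_i \sum_j G i i j j.
Proof.
rewrite mulr_sumr; apply: eq_bigr => i _.
rewrite (bigD1 i) //= [X in _ + X]big1 ?addr0 => [|c /negbTE ne]; last first.
  by rewrite big1 // => j _; rewrite big1 // => d _; rewrite ne !mul0r.
rewrite mulr_sumr; apply: eq_bigr => j _.
rewrite (bigD1 j) //= big1 ?addr0 => [|d /negbTE ne]; last by rewrite ne mulr0 !mul0r.
by rewrite !eqxx !mul1r.
Qed.

Lemma sum4_swapZ (a : R) G :
  \sum_i \sum_c \sum_j \sum_d ((d == i)%:R * (c == j)%:R * a * G i c j d) =
  a * \sum_i \sum_c G i c c i.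
Proof.
rewrite mulr_sumr; apply: eq_bigr => i _; rewrite mulr_sumr; apply: eq_bigr => c _.
rewrite (bigD1 c) //= [X in _ + X]big1 ?addr0 => [|j /negbTE ne]; last first.
  by rewrite big1 // => d _; rewrite (eq_sym c) ne mulr0 !mul0r.
rewrite (bigD1 i) //= big1 ?addr0 => [|d /negbTE ne]; last by rewrite ne !mul0r.
by rewrite !eqxx !mul1r.
Qed.

End KroneckerSums.

Section PPTState.
Variables (C : numClosedFieldType) (M : nat).
Local Notation n := (M + M)%N.
Local Notation unidx := mxtens.mxtens_unindex.

(* Up to [rho_scale], the state is
   M^2 (P_00 + P_11) + M (P_01 + P_10) + M (|O_00><O_11| + h.c.) - (|O_01><O_10| + h.c.)
   where P_st projects onto C^M_s (x) C^M_t and O_st = sum_i |s i> (x) |t i>. *)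
Definition rho_coef (s : bool) (i : 'I_M) (t : bool) (c : 'I_M)
    (s' : bool) (j : 'I_M) (t' : bool) (d : 'I_M) : C :=
  match s, t, s', t' with
  | true, true, true, true | false, false, false, false =>
      (i == j)%:R * (c == d)%:R * (M * M)%:R
  | true, false, true, false | false, true, false, true => (i == j)%:R * (c == d)%:R * M%:R
  | true, true, false, false | false, false, true, true => (c == i)%:R * (d == j)%:R * M%:R
  | true, false, false, true | false, true, true, false => (c == i)%:R * (d == j)%:R * (-1)
  | _, _, _, _ => 0
  end.

Definition rho_scale : C := (2 * M ^ 3 * M.+1)%:R^-1.

Definition ppt_state : 'M[C]_(n * n) := \matrix_(x, y)
  (rho_scale * rho_coef (bblock (unidx x).1) (bindex (unidx x).1)
                        (bblock (unidx x).2) (bindex (unidx x).2)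
                        (bblock (unidx y).1) (bindex (unidx y).1)
                        (bblock (unidx y).2) (bindex (unidx y).2)).

Lemma ppt_stateE k a l b : ppt_state (idx (k, a)) (idx (l, b)) =
  rho_scale * rho_coef (bblock k) (bindex k) (bblock a) (bindex a)
                       (bblock l) (bindex l) (bblock b) (bindex b).
Proof. by rewrite mxE !mxtens.mxtens_indexK. Qed.

Lemma ppt_state_bshift s i t c s' j t' d :
  ppt_state (idx (bshift s i, bshift t c)) (idx (bshift s' j, bshift t' d)) =
  rho_scale * rho_coef s i t c s' j t' d.
Proof. by rewrite ppt_stateE !bblock_bshift !bindex_bshift. Qed.

Lemma rho_coef_conj s i t c s' j t' d :
  (rho_coef s' j t' d s i t c)^* = rho_coef s i t c s' j t' d.
Proof.
case: s; case: t; case: s'; case: t' => /=;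
  rewrite ?rmorph0 ?rmorphM /= ?rmorphN /= ?rmorph1 ?conjC_nat //.
all: first [by rewrite (eq_sym j i) (eq_sym d c) | by rewrite [(d == j)%:R * _]mulrC].
Qed.

Lemma rho_scale_conj : rho_scale^* = rho_scale.
Proof. by rewrite fmorphV /= conjC_nat. Qed.

Lemma ppt_state_psd : psdmx ppt_state.
Proof.
split.
  apply: adjmx_tens_id => k a l b.
  by rewrite !ppt_stateE rmorphM /= rho_scale_conj rho_coef_conj.
move=> v; rewrite mxform_trace (mxtrace_mul_bshift ppt_state_bshift (mul_adjmxE v)).
apply: mulr_ge0; first by rewrite invr_ge0 ler0n.
rewrite !big_bool /= !sum4_mul0 !add0r !addr0 !sum4_diagZ !sum4_crossZ.
exact: block_form_ge0.
Qed.

Lemma ppt_state_ptrans_psd : (0 < M)%N -> psdmx (ptrans ppt_state).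
Proof.
move=> M_gt0; split.
  apply: adjmx_tens_id => k a l b.
  by rewrite !ptransE !ppt_stateE rmorphM /= rho_scale_conj rho_coef_conj.
move=> v; rewrite mxform_trace (mxtrace_mul_bshift (k0 := rho_scale)
  (g := fun s i t c s' j t' d => rho_coef s i t' d s' j t c) _ (mul_adjmxE v)); last first.
  by move=> *; rewrite ptransE ppt_state_bshift.
apply: mulr_ge0; first by rewrite invr_ge0 ler0n.
rewrite !big_bool /= !sum4_mul0 !add0r !addr0 !sum4_diagZ_sym !sum4_swapZ.
exact: block_form_ptrans_ge0.
Qed.

Lemma ppt_state_trace : (0 < M)%N -> \tr ppt_state = 1.
Proof.
move=> M_gt0; rewrite /mxtrace big_mxtens_bshift.
rewrite (eq_bigr (fun s => \sum_(t : bool) (M * M)%:R *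
    (rho_scale * if s == t then (M * M)%:R else M%:R))); last first.
  move=> s _; apply: eq_bigr => t _; rewrite -sum2_const; apply: eq_bigr => i _.
  apply: eq_bigr => c _; rewrite ppt_state_bshift.
  by case: s; case: t; rewrite /= !eqxx !mul1r.
rewrite !big_bool /= -[RHS](@mulVf _ (2 * M ^ 3 * M.+1)%:R); last first.
  by rewrite pnatr_eq0 -lt0n !muln_gt0 M_gt0.
by rewrite -/rho_scale !natrM -natr1; ring.
Qed.

End PPTState.

Section Witness.
Variables (C : numClosedFieldType) (M : nat) (U : 'M[C]_M).
Local Notation n := (M + M)%N.

Definition witness : 'M[C]_(n * n) := id_tens (PhiU U) (Pplus n).

Lemma PhiU_diag X s i j : PhiU U X (bshift s i) (bshift s j) =
  M%:R^-1 * ((\sum_c X (bshift (~~ s) c) (bshift (~~ s) c)) * (i == j)%:R).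
Proof.
rewrite /PhiU /bshift mxE; case: s => /=;
  rewrite ?block_mxEul ?block_mxEdr mxE /mxtrace mulr_natr; congr (_ * (_ *+ _));
  by apply: eq_bigr => c _; rewrite !mxE.
Qed.

Lemma PhiU_offdiag X s i j : PhiU U X (bshift s i) (bshift (~~ s) j) =
  M%:R^-1 * - (X (bshift s i) (bshift (~~ s) j) +
    \sum_d (\sum_c U i c * X (bshift (~~ s) d) (bshift s c)) * (U j d)^*).
Proof.
rewrite /PhiU /bshift mxE; case: s => /=; rewrite ?block_mxEur ?block_mxEdl !mxE;
  congr (_ * - (_ + _)); apply: eq_bigr => d _; rewrite !mxE; congr (_ * _);
  by apply: eq_bigr => c _; rewrite !mxE.
Qed.

Lemma witnessE k a l b :
  witness (idx (k, a)) (idx (l, b)) = PhiU U (n%:R^-1 *: delta_mx k l) a b.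
Proof.
rewrite /witness /id_tens sum_delta_tensE; congr (PhiU U _ a b).
by apply/matrixP => a' b'; rewrite !mxE (sum_delta_tensE (fun k' l' => delta_mx k' l')) mxE.
Qed.

Definition witness_coef (s : bool) (i : 'I_M) (t : bool) (c : 'I_M)
    (s' : bool) (j : 'I_M) (t' : bool) (d : 'I_M) : C :=
  match s, t, s', t' with
  | false, true, false, true | true, false, true, false => (i == j)%:R * (c == d)%:R
  | false, false, true, true | true, true, false, false => (c == i)%:R * (d == j)%:R * (-1)
  | false, true, true, false | true, false, false, true => - (U c j * (U d i)^*)
  | _, _, _, _ => 0
  end.

Let unit_mx s i s' j : 'M[C]_n := n%:R^-1 *: delta_mx (bshift s i) (bshift s' j).

Let unit_mxE s i s' j u c v d : unit_mx s i s' j (bshift u c) (bshift v d) =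
  n%:R^-1 * ((u == s) && (c == i) && (v == s') && (d == j))%:R.
Proof. by rewrite !mxE !eq_bshift andbA. Qed.

Let unit_mx_trace s i s' j u :
  \sum_c unit_mx s i s' j (bshift u c) (bshift u c) =
  n%:R^-1 * ((u == s) && (u == s') && (i == j))%:R.
Proof.
under eq_bigr do rewrite unit_mxE.
rewrite -mulr_sumr; congr (_ * _).
case: (u == s) (u == s') => [] [] /=; try by rewrite big1 // => c _; rewrite ?andbF.
by rewrite (bigD1 i) //= eqxx big1 ?addr0 => [|c /negbTE ->].
Qed.

Let unit_mx_twist s i s' j u v c d :
  \sum_d0 (\sum_c0 U c c0 * unit_mx s i s' j (bshift u d0) (bshift v c0)) * (U d d0)^* =
  n%:R^-1 * (((u == s) && (v == s'))%:R * (U c j * (U d i)^*)).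
Proof.
under eq_bigr => d0 _ do under eq_bigr => c0 _ do rewrite unit_mxE.
case: (u == s); case: (v == s') => /=; rewrite ?mul0r ?mulr0; last 3 first.
- by rewrite big1 // => d0 _; rewrite big1 ?mul0r // => c0 _; rewrite andbF mulr0 mulr0.
- by rewrite big1 // => d0 _; rewrite big1 ?mul0r // => c0 _; rewrite mulr0.
- by rewrite big1 // => d0 _; rewrite big1 ?mul0r // => c0 _; rewrite mulr0.
rewrite (bigD1 i) //= [X in _ + X]big1 ?addr0 => [|d0 /negbTE ne]; last first.
  by rewrite big1 ?mul0r // => c0 _; rewrite ne /= mulr0 mulr0.
rewrite (bigD1 j) //= [X in _ + X]big1 ?addr0 => [|c0 /negbTE ne]; last first.
  by rewrite ne andbF /= mulr0 mulr0.
by rewrite !eqxx mulr1 mul1r mulrCA mulrA.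
Qed.

Lemma witness_bshift s i t c s' j t' d :
  witness (idx (bshift s i, bshift t c)) (idx (bshift s' j, bshift t' d)) =
  (M%:R^-1 * n%:R^-1) * witness_coef s i t c s' j t' d.
Proof.
rewrite witnessE -mulrA; case: t; case: t';
  rewrite ?PhiU_diag ?PhiU_offdiag; congr (_ * _);
  rewrite ?unit_mx_trace ?unit_mx_twist ?unit_mxE; case: s; case: s' => /=;
  rewrite ?andbF ?mul0r ?mulr0 ?mul1r ?addr0 ?add0r ?oppr0 ?mulrN ?mulrA ?mul0r //;
  by rewrite eqxx andbT mulr1 -mulrA -natrM mulnb.
Qed.

(* With O_s = sum_i |s i> (x) |s i>, [omega_coh s Z] is <O_(~~ s)| Z |O_s>. *)
Definition block_tr (s : bool) (Z : 'M[C]_(n * n)) : C :=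
  \sum_i \sum_c Z (idx (bshift s i, bshift (~~ s) c)) (idx (bshift s i, bshift (~~ s) c)).

Definition omega_coh (s : bool) (Z : 'M[C]_(n * n)) : C :=
  \sum_i \sum_j Z (idx (bshift (~~ s) j, bshift (~~ s) j)) (idx (bshift s i, bshift s i)).

Definition twist_coh (s : bool) (Z : 'M[C]_(n * n)) : C :=
  \sum_i \sum_c \sum_j \sum_d (U c j * (U d i)^* *
    Z (idx (bshift (~~ s) j, bshift s d)) (idx (bshift s i, bshift (~~ s) c))).

Lemma mxtrace_witness_mul (Z : 'M[C]_(n * n)) :
  \tr (witness *m Z) = (M%:R^-1 * n%:R^-1) *
    \sum_(s : bool) (block_tr s Z - omega_coh s Z - twist_coh s Z).
Proof.
rewrite (mxtrace_mul_bshift witness_bshift (fun _ _ => erefl)) !big_bool /=.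
rewrite !sum4_mul0 !add0r !addr0 !sum4_diag !sum4_crossZ !sum4_mulNl.
rewrite /block_tr /omega_coh /twist_coh /=.
congr (_ * _); ring.
Qed.

Definition block_row (v : 'cV[C]_n) (s : bool) : 'rV[C]_M := \row_i v (bshift s i) 0.

Let big_distr4 (f g : 'I_M -> 'I_M -> C) :
  \sum_i \sum_c \sum_j \sum_d (f c j * g d i) =
  (\sum_c \sum_j f c j) * (\sum_d \sum_i g d i).
Proof.
rewrite exchange_big mulr_suml; apply: eq_bigr => c _.
rewrite exchange_big mulr_suml; apply: eq_bigr => j _.
rewrite exchange_big mulr_sumr; apply: eq_bigr => d _.
by rewrite mulr_sumr.
Qed.

Lemma witness_tens_form (psi phi : 'cV[C]_n) :
  let p := block_row psi in let q := block_row phi in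
  let sigma s := dotmx (p s) (map_mx Num.conj (q s)) in
  let tau s := dotmx (p s *m U^T) (q s) in
  (adjmx (psi *t phi) *m witness *m (psi *t phi)) 0 0 = (M%:R^-1 * n%:R^-1) *
    \sum_(s : bool) (dotmx (p s) (p s) * dotmx (q (~~ s)) (q (~~ s))
                     - sigma (~~ s) * (sigma s)^* - tau (~~ s) * (tau s)^*).
Proof.
move=> p q sigma tau; rewrite mxform_trace mxtrace_witness_mul; congr (_ * _).
apply: eq_bigr => s _; set Z := _ *m adjmx _.
have ZE k a l b : Z (idx (k, a)) (idx (l, b)) = psi k 0 * phi a 0 * (psi l 0 * phi b 0)^*.
  by rewrite /Z mul_adjmxE !tensmx_colE.
congr (_ - _ - _).
- rewrite /block_tr !dotmx_sum mulr_suml; apply: eq_bigr => i _.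
  rewrite mulr_sumr; apply: eq_bigr => c _.
  by rewrite ZE !mxE rmorphM; ring.
- rewrite /omega_coh exchange_big /sigma !dotmx_sum rmorph_sum mulr_suml.
  apply: eq_bigr => j _; rewrite mulr_sumr; apply: eq_bigr => i _.
  by rewrite ZE !mxE /= !conjCK; ring.
- rewrite /twist_coh (eq_bigr (fun i => \sum_c \sum_j \sum_d
      ((U c j * psi (bshift (~~ s) j) 0 * (phi (bshift (~~ s) c) 0)^*) *
       ((U d i)^* * (psi (bshift s i) 0)^* * phi (bshift s d) 0)))); last first.
    move=> i _; apply: eq_bigr => c _; apply: eq_bigr => j _; apply: eq_bigr => d _.
    by rewrite ZE rmorphM /=; ring.
  rewrite big_distr4 /tau !dotmx_sum rmorph_sum; congr (_ * _).
    apply: eq_bigr => c _; rewrite !mxE mulr_suml; apply: eq_bigr => j _.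
    by rewrite !mxE; ring.
  apply: eq_bigr => d _; rewrite !mxE rmorphM /= conjCK rmorph_sum mulr_suml.
  by apply: eq_bigr => i _; rewrite !mxE rmorphM /=; ring.
Qed.

Lemma witness_block_positive (psi phi : 'cV[C]_n) : U^T = - U -> U \is unitarymx ->
  0 <= (adjmx (psi *t phi) *m witness *m (psi *t phi)) 0 0.
Proof.
move=> skewU unitU; rewrite witness_tens_form /=.
apply: mulr_ge0; first by rewrite mulr_ge0 ?invr_ge0 ?ler0n.
rewrite big_bool /=.
have := cross_terms_le (dnorm_ge0 (@dotmx C M) _) (dnorm_ge0 (@dotmx C M) _)
  (dnorm_ge0 (@dotmx C M) _) (dnorm_ge0 (@dotmx C M) _)
  (skew_unitary_Bessel (block_row psi false) (block_row phi false) skewU unitU)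
  (skew_unitary_Bessel (block_row psi true) (block_row phi true) skewU unitU).
rewrite -subr_ge0 => /le_trans; apply.
by rewrite le_eqVlt; apply/orP; left; apply/eqP; ring.
Qed.

Lemma witness_not_psd : (0 < M)%N -> ~ psdmx witness.
Proof.
move=> M_gt0 [_ W_psd].
pose v : 'cV[C]_(n * n) := \col_x
  ((mxtens.mxtens_unindex x).1 == (mxtens.mxtens_unindex x).2)%:R.
have := W_psd v; rewrite mxform_trace mxtrace_witness_mul.
set Z := _ *m adjmx _.
have ZE k a l b : Z (idx (k, a)) (idx (l, b)) = (k == a)%:R * (l == b)%:R.
  by rewrite /Z mul_adjmxE !mxE !mxtens.mxtens_indexK /= conjC_nat.
have neq_bshift s i j : (bshift s i == bshift (~~ s) j) = false.
  by rewrite eq_bshift; case: s.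
have neqN_bshift s i j : (bshift (~~ s) i == bshift s j) = false.
  by rewrite eq_bshift; case: s.
rewrite (eq_bigr (fun _ => - (M * M)%:R)) => [|s _]; last first.
  have -> : block_tr s Z = 0.
    by rewrite /block_tr big1 // => i _; rewrite big1 // => c _; rewrite ZE neq_bshift mul0r.
  have -> : twist_coh s Z = 0.
    rewrite /twist_coh big1 // => i _; rewrite big1 // => c _; rewrite big1 // => j _.
    by rewrite big1 // => d _; rewrite ZE neqN_bshift mul0r mulr0.
  rewrite /omega_coh (eq_bigr (fun _ => \sum_(j < M) 1)) => [|i _]; last first.
    by apply: eq_bigr => j _; rewrite ZE !eqxx mulr1.
  by rewrite !sumr_const card_ord sub0r subr0 -mulrnA.
rewrite sumr_const card_bool mulNrn mulrN oppr_ge0 => le0.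
have : 0 < M%:R^-1 / n%:R * ((M * M)%:R *+ 2) :> C.
  have MM_gt0 : 0 < (M * M)%:R :> C by rewrite ltr0n muln_gt0 M_gt0.
  apply: mulr_gt0; last by rewrite mulrn_wgt0.
  by apply: divr_gt0; rewrite ?invr_gt0 ltr0n ?addn_gt0 M_gt0.
by move/lt_le_trans/(_ le0); rewrite ltxx.
Qed.

Lemma mxtrace_witness_ppt_state : U^T = - U -> U \is unitarymx -> (0 < M)%N ->
  \tr (witness *m ppt_state C M) < 0.
Proof.
move=> skewU unitU M_gt0; rewrite mxtrace_witness_mul.
have U_skew i j : U j i = - U i j.
  by have := congr1 (fun A : 'M[C]_M => A i j) skewU; rewrite !mxE.
have twist_sum : \sum_i \sum_j U i j * (U j i)^* = - M%:R.
  rewrite (eq_bigr (fun _ => -1)) => [|i _]; first by rewrite sumrN sumr_const card_ord.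
  have := congr1 (fun A : 'M[C]_M => A i i) (unitarymxP unitU).
  rewrite !mxE eqxx mulr1n => <-; rewrite -sumrN; apply: eq_bigr => j _.
  by rewrite !mxE [U j i]U_skew rmorphN /= mulrN.
pose rho := ppt_state C M.
have rho_pos : 0 < rho_scale C M * M%:R.
  by rewrite mulr_gt0 ?invr_gt0 ?ltr0n ?muln_gt0 ?expn_gt0 ?M_gt0.
have block_rho s : block_tr s rho = (M * M)%:R * (rho_scale C M * M%:R).
  rewrite /block_tr -sum2_const; apply: eq_bigr => i _; apply: eq_bigr => c _.
  by rewrite ppt_state_bshift; case: s; rewrite /= !eqxx !mul1r.
have omega_rho s : omega_coh s rho = (M * M)%:R * (rho_scale C M * M%:R).
  rewrite /omega_coh -sum2_const; apply: eq_bigr => i _; apply: eq_bigr => j _.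
  by rewrite ppt_state_bshift; case: s; rewrite /= !eqxx !mul1r.
have twist_rho s : twist_coh s rho = rho_scale C M * M%:R.
  rewrite /twist_coh (eq_bigr (fun i => \sum_c \sum_j \sum_d ((c == i)%:R *
    (d == j)%:R * (- rho_scale C M) * (U c j * (U d i)^*)))).
    by rewrite sum4_crossZ twist_sum mulrNN.
  move=> i _; apply: eq_bigr => c _; apply: eq_bigr => j _; apply: eq_bigr => d _.
  by rewrite ppt_state_bshift; case: s => /=; ring.
rewrite (eq_bigr (fun _ => - (rho_scale C M * M%:R))) => [|s _]; last first.
  by rewrite block_rho omega_rho twist_rho subrr sub0r.
rewrite sumr_const card_bool mulNrn mulrN oppr_lt0.
by apply: mulr_gt0; [apply: divr_gt0; rewrite ?invr_gt0 ltr0n ?addn_gt0 M_gt0 | rewrite mulrn_wgt0].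
Qed.

End Witness.

Theorem proposition2 (C : numClosedFieldType) (N : nat) (U : 'M[C]_(N.*2)) :
  (1 <= N)%N ->
  U \is unitarymx ->
  U^T = - U ->
  let W := id_tens (PhiU U) (Pplus (N.*2 + N.*2)) in
  (forall psi phi : 'cV[C]_(N.*2 + N.*2),
      0 <= (adjmx (psi *t phi) *m W *m (psi *t phi)) 0 0)
  /\ ~ psdmx W
  /\ exists rho : 'M[C]_((N.*2 + N.*2) * (N.*2 + N.*2)),
       densitymx rho /\ psdmx (ptrans rho) /\ \tr (W *m rho) < 0.
Proof.
move=> N_gt0 unitU skewU W.
have M_gt0 : (0 < N.*2)%N by rewrite double_gt0.
split; first by move=> psi phi; exact: witness_block_positive.
split; first exact: witness_not_psd.
exists (ppt_state C N.*2).
split; first by split; [exact: ppt_state_psd | exact: ppt_state_trace].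
by split; [exact: ppt_state_ptrans_psd | exact: mxtrace_witness_ppt_state].
Qed.
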